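(* Let $N\ge 1$, $g>0$, $h>0$, and $u_m,\alpha_1,\dots,\alpha_N\in\mathbb{R}$. Let $A_N\in\mathbb{R}^{(N+2)\times(N+2)}$ be the matrix $$A_N=\begin{pmatrix} 0&1&0&\cdots&0\\ gh-u_m^2-\sum_{i=1}^N\frac{\alpha_i^2}{2i+1} & 2u_m & \frac{2\alpha_1}{3} & \cdots & \frac{2\alpha_N}{2N+1}\\ -2u_m\alpha_1 & 2\alpha_1 & u_m & & \\ \vdots & \vdots & & \ddots & \\ -2u_m\alpha_N & 2\alpha_N & & & u_m \end{pmatrix},$$ where the lower-right $N\times N$ block is $u_m I_N$ and all unspecified entries are zero. Then $$\det(A_N-\lambda I)=(u_m-\lambda)^N\left[(\lambda-u_m)^2-gh-\sum_{i=1}^N\frac{3\alpha_i^2}{2i+1}\right],$$ so the eigenvalues of $A_N$ are $$\lambda_{1,2}=u_m\pm\sqrt{gh+\sum_{i=1}^N\frac{3\alpha_i^2}{2i+1}},\qquad \lambda_{i+2}=u_m\ (i=1,\dots,N).$$ Moreover, $A_N$ is diagonalizable over $\mathbb{R}$ (the eigenvalue $u_m$ has an $N$-dimensional eigenspace), so the system $\partial_t U + A_N(U)\partial_x U=0$ is hyperbolic whenever $h>0$.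
   Context: $A_N$ is the system matrix (flux Jacobian minus non-conservative matrix) of the Shallow Water Linearized Moment Equations (SWLME) without source terms, written in the variables $U=(h,hu_m,h\alpha_1,\dots,h\alpha_N)$, where $h$ is the water height, $u_m$ the mean horizontal velocity, $\alpha_i$ the coefficients of the velocity profile in scaled Legendre polynomials, and $g$ the gravitational constant. *)

From HB Require Import structures.
From mathcomp Require Import all_boot all_order all_algebra.
Set Implicit Arguments. Unset Strict Implicit. Unset Printing Implicit Defensive.
Import Order.TTheory GRing.Theory Num.Theory.
Local Open Scope ring_scope.

(* Coefficients alpha_1..alpha_N are given as alpha : nat -> R, only alpha 1 .. alpha N are used. *)

Definition alpha_sum (R : fieldType) (N : nat) (alpha : nat -> R) (c : R) : R :=
  \sum_(1 <= i < N.+1) c * alpha i ^+ 2 / (2 * i + 1)%:R.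

Definition SWLME_A (R : fieldType) (N : nat) (g h um : R) (alpha : nat -> R)
  : 'M[R]_(N.+2) :=
  \matrix_(i < N.+2, j < N.+2)
    if (i == 0%N :> nat) then (if (j == 1%N :> nat) then 1 else 0)
    else if (i == 1%N :> nat) then
      (if (j == 0%N :> nat) then g * h - um ^+ 2 - alpha_sum N alpha 1
       else if (j == 1%N :> nat) then 2 * um
       else 2 * alpha (j.-1) / (2 * j.-1 + 1)%:R)
    else
      (if (j == 0%N :> nat) then - (2 * um * alpha (i.-1))
       else if (j == 1%N :> nat) then 2 * alpha (i.-1)
       else if (j == i :> nat) then um else 0).

From HB Require Import structures.
From mathcomp Require Import all_boot all_order all_algebra.
From mathcomp Require Import ring lra zify.
Set Implicit Arguments. Unset Strict Implicit. Unset Printing Implicit Defensive.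
Import Order.TTheory GRing.Theory Num.Theory.
Local Open Scope ring_scope.

(* Split the indices of A_N as 2 + N: the first two carry (h, h u_m), the last
   N the moments h alpha_i.  Then
     A_N - l I = [[P l, Q], [a r, (u_m - l) I]]
   where a = (2 alpha_i)_i, r = (-u_m, 1), and Q only has the second row
   b = (2 alpha_i / (2i+1))_i.  The lower-left block has rank one and
   a r = S (P l) - (u_m - l) S with S = a e0, e0 = (1, 0); since moreover
   S Q = 0, conjugating by the unipotent shear [[I, 0], [S, I]] makes the
   matrix block upper triangular with diagonal blocks P l + Q S and
   (u_m - l) I.  As b a = 4 sum alpha_i^2/(2i+1), the 2x2 block has
   determinant (l - u_m)^2 - gh - sum 3 alpha_i^2/(2i+1); this yields the
   characteristic polynomial, and for l = u_m an invertible 2x2 block, so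
   A_N - u_m I has rank 2 and the eigenspace of u_m has dimension N.  The
   three distinct eigenvalues u_m, u_m +- c then have eigenspaces of total
   dimension N + 2, hence A_N is diagonalizable. *)

Lemma det_mx2 (R : comNzRingType) (M : 'M[R]_2) :
  \det M = M 0 0 * M 1 1 - M 0 1 * M 1 0.
Proof.
rewrite (expand_det_row _ 0) !big_ord_recl big_ord0 /cofactor !det_mx11 !mxE /=.
rewrite addr0 !expr0 expr1 !mul1r mulN1r mulrN.
have -> : lift 0 (0 : 'I_1) = 1 by apply/val_inj.
by have -> : lift 1 (0 : 'I_1) = 0 by apply/val_inj.
Qed.

Section BlockElimination.
Variables (R : comUnitRingType) (m n : nat).

(* The unipotent lower block-triangular matrix [[I, 0], [S, I]]; its inverse
   is shear (- S). *)
Definition shear (S : 'M[R]_(n, m)) : 'M[R]_(m + n) := block_mx 1%:M 0 S 1%:M.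

Lemma det_shear (S : 'M[R]_(n, m)) : \det (shear S) = 1.
Proof. by rewrite det_lblock !det1 mulr1. Qed.

Lemma shear_unit (S : 'M[R]_(n, m)) : shear S \in unitmx.
Proof. by rewrite unitmxE det_shear unitr1. Qed.

Lemma shear_elim (P : 'M[R]_m) (Q : 'M[R]_(m, n)) (S : 'M[R]_(n, m)) (D : 'M[R]_n) :
  S *m Q = 0 ->
  shear (- S) *m block_mx P Q (S *m P - D *m S) D *m shear S =
  block_mx (P + Q *m S) Q 0 D.
Proof.
move=> SQ0; rewrite /shear !mulmx_block.
rewrite !mul1mx !mul0mx !mulmx0 !mulmx1 !addr0 !add0r !mulNmx SQ0 oppr0 add0r.
by rewrite addKr addNr.
Qed.

End BlockElimination.

Section RankFacts.
Variable F : fieldType.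

Lemma mxrank_mul_units (n : nat) (L M U : 'M[F]_n) :
  L \in unitmx -> U \in unitmx -> \rank (L *m M *m U) = \rank M.
Proof.
move=> unitL unitU; have fullL : row_full L by rewrite row_full_unit.
by rewrite mxrankMfree ?row_free_unit // (eqmxMfull M fullL).
Qed.

Lemma rank_ublock_unit (m n : nat) (P : 'M[F]_m) (Q : 'M[F]_(m, n)) :
  P \in unitmx -> \rank (block_mx P Q 0 (0 : 'M_n)) = m.
Proof.
move=> unitP; rewrite block_mxEv row_mx0 rank_col_mx0.
apply/eqP; rewrite eqn_leq rank_leq_row /=.
apply: leq_trans (mxrankM_maxl _ (col_mx (1%:M : 'M_m) (0 : 'M_(n, m)))).
by rewrite mul_row_col mulmx1 mulmx0 addr0 mxrank_unit.
Qed.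

Lemma eigenvalue_det (n : nat) (A : 'M[F]_n) (l : F) :
  eigenvalue A l = (\det (A - l%:M) == 0).
Proof.
by rewrite /eigenvalue /eigenspace kermx_eq0 row_free_unit unitmxE unitfE negbK.
Qed.

(* A matrix is diagonalizable as soon as the eigenspaces of some distinct
   scalars have total dimension at least n (their sum is direct). *)
Lemma diagonalizable_eigenspace_ranks (n : nat) (A : 'M[F]_n) (rs : seq F) :
  uniq rs -> (n <= \sum_(r <- rs) \rank (eigenspace A r))%N -> diagonalizable A.
Proof.
move=> uniq_rs rank_sum; apply/diagonalizablePeigen; exists rs => //.
apply/eqmxP; rewrite submx1 sub1mx /row_full eqn_leq rank_leq_col /=.
rewrite (big_nth 0) big_mkord; rewrite (big_nth 0) big_mkord in rank_sum.
suff /mxdirectP /= -> : mxdirect (\sum_(i < size rs) eigenspace A rs`_i) by [].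
apply: mxdirect_sum_eigenspace => i j _ _ rs_ij; apply/val_inj.
by apply: uniqP rs_ij; rewrite ?inE.
Qed.

End RankFacts.

Section SWLMEBlocks.
Variables (R : fieldType) (N : nat) (g h um : R) (alpha : nat -> R).

Local Notation A := (SWLME_A N g h um alpha).

Definition moment_col : 'cV[R]_N := \col_k (2 * alpha k.+1).
Definition moment_row : 'rV[R]_N := \row_k (2 * alpha k.+1 / (2 * k.+1 + 1)%:R).
Definition velocity_row : 'rV[R]_2 := \row_j (if j == 0 then - um else 1).
Definition e0 : 'rV[R]_2 := delta_mx 0 0.

Definition head_block (l : R) : 'M[R]_2 := \matrix_(i < 2, j < 2)
  if i == 0 then (if j == 0 then - l else 1)
  else (if j == 0 then g * h - um ^+ 2 - alpha_sum N alpha 1 else 2 * um - l).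

Definition head_coupling : 'M[R]_(2, N) := delta_mx 1 0 *m moment_row.

Definition moment_shear : 'M[R]_(N, 2) := moment_col *m e0.

Lemma swlme_blocks (l : R) :
  (A - l%:M : 'M_(2 + N)) =
  block_mx (head_block l) head_coupling (moment_col *m velocity_row) (um - l)%:M.
Proof.
set E := (_ - _ : 'M_(2 + N)).
rewrite -(submxK E); congr block_mx; apply/matrixP => i j; rewrite !mxE /=.
- by case: i => [[|[|i]] Hi] //; case: j => [[|[|j]] Hj] //=;
    rewrite ?mxE /= ?sub0r ?mulr1n ?mulr0n ?subr0.
- rewrite -(inj_eq val_inj) /= big_ord1 !mxE /= !add1n.
  by case: i => [[|[|i]] Hi] //=; rewrite ?mul0r ?mul1r ?mulr0n ?subr0.
- rewrite -(inj_eq val_inj) /= big_ord1 !mxE /= !add1n.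
  case: j => [[|[|j]] Hj] //=; rewrite ?mulr0n ?subr0.
    by rewrite mulrN mulrAC.
  by rewrite mulr1.
rewrite -(inj_eq val_inj) /= !eqn_add2l eq_sym.
have [->|ne] := eqVneq i j; first by rewrite !eqxx mulr1n.
have ne' : (i : nat) != j := ne.
by rewrite (negbTE ne') !mulr0n subr0.
Qed.

Lemma e0_head_block (l : R) : e0 *m head_block l = velocity_row - (l - um) *: e0.
Proof.
apply/matrixP => i j; rewrite !mxE big_ord_recl big_ord1 !mxE /=.
rewrite (ord1 i) -!(inj_eq val_inj) /=.
case: j => [[|[|j]] Hj] //=; rewrite ?mxE /= ?mul1r ?mul0r ?addr0 ?mulr0 ?subr0 ?mulr1 //.
by rewrite opprB addKr.
Qed.

Lemma moment_velocity (l : R) :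
  moment_col *m velocity_row =
  moment_shear *m head_block l - (um - l)%:M *m moment_shear.
Proof.
rewrite /moment_shear mul_scalar_mx -mulmxA e0_head_block scalemxAr -mulmxBr.
by rewrite -addrA -opprD -scalerDl addrA subrK subrr scale0r subr0.
Qed.

Lemma swlme_reduced (l : R) :
  shear (- moment_shear) *m (A - l%:M : 'M_(2 + N)) *m shear moment_shear =
  block_mx (head_block l + head_coupling *m moment_shear) head_coupling 0 (um - l)%:M.
Proof.
rewrite swlme_blocks (moment_velocity l); apply: shear_elim.
by rewrite mulmxA -(mulmxA moment_col) mul_delta_mx_0 // mulmx0 mul0mx.
Qed.

Lemma alpha_sumZ (c : R) : alpha_sum N alpha c = c * alpha_sum N alpha 1.
Proof. by rewrite /alpha_sum mulr_sumr; apply: eq_bigr => i _; ring. Qed.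

Lemma moment_row_col : moment_row *m moment_col = (4 * alpha_sum N alpha 1)%:M.
Proof.
apply/matrixP => i j; rewrite (ord1 i) (ord1 j) !mxE /= mulr1n.
rewrite /alpha_sum big_add1 /= big_mkord mulr_sumr; apply: eq_bigr => k _.
by rewrite !mxE; ring.
Qed.

Lemma det_reduced_head (l : R) :
  \det (head_block l + head_coupling *m moment_shear) =
  (l - um) ^+ 2 - g * h - alpha_sum N alpha 3.
Proof.
rewrite /head_coupling /moment_shear !mulmxA -(mulmxA _ moment_row) moment_row_col.
rewrite mul_mx_scalar -scalemxAl mul_delta_mx det_mx2 !mxE /= (alpha_sumZ 3); ring.
Qed.

Lemma swlme_char_poly (l : R) :
  \det (A - l%:M) = (um - l) ^+ N * ((l - um) ^+ 2 - g * h - alpha_sum N alpha 3).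
Proof.
have := congr1 determinant (swlme_reduced l).
rewrite !det_mulmx !det_shear mul1r mulr1 det_ublock det_reduced_head det_scalar.
by move=> ->; rewrite mulrC.
Qed.

(* For l = u_m the reduced 2x2 block is invertible and the diagonal block
   vanishes, so A_N - u_m I has rank 2. *)
Lemma swlme_rank_shift_um : g * h + alpha_sum N alpha 3 != 0 ->
  \rank (A - um%:M) = 2.
Proof.
move=> K_neq0.
have head_unit : head_block um + head_coupling *m moment_shear \in unitmx.
  by rewrite unitmxE det_reduced_head subrr expr0n sub0r -opprD unitfE oppr_eq0.
rewrite -[LHS](mxrank_mul_units _ (shear_unit (- moment_shear)) (shear_unit moment_shear)).
by rewrite swlme_reduced subrr raddf0 rank_ublock_unit.
Qed.

Lemma swlme_eigenspace_um : g * h + alpha_sum N alpha 3 != 0 ->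
  \rank (eigenspace A um) = N.
Proof. by move=> K_neq0; rewrite mxrank_ker swlme_rank_shift_um // subn2. Qed.

End SWLMEBlocks.

Lemma alpha_sum_ge0 (R : realFieldType) (N : nat) (alpha : nat -> R) (c : R) :
  0 <= c -> 0 <= alpha_sum N alpha c.
Proof.
move=> c_ge0; apply: sumr_ge0 => i _.
by rewrite mulr_ge0 ?invr_ge0 ?ler0n // mulr_ge0 ?sqr_ge0.
Qed.

Section SWLMESpectrum.
Variables (R : rcfType) (N : nat) (g h um : R) (alpha : nat -> R).
Hypothesis K_gt0 : 0 < g * h + alpha_sum N alpha 3.

Local Notation A := (SWLME_A N g h um alpha).
Local Notation c := (Num.sqrt (g * h + alpha_sum N alpha 3)).

Lemma swlme_eigenvalueE (l : R) :
  eigenvalue A l = ((um - l) ^+ N == 0) || ((l - um == c) || (l - um == - c)).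
Proof.
rewrite eigenvalue_det swlme_char_poly mulf_eq0 -addrA -opprD subr_eq0.
by rewrite -[in LHS](sqr_sqrtr (ltW K_gt0)) eqf_sqr.
Qed.

Lemma swlme_eigenvalueP (l : R) : (0 < N)%N ->
  eigenvalue A l <-> [\/ l = um + c, l = um - c | l = um].
Proof.
move=> N_gt0; rewrite swlme_eigenvalueE expf_eq0 N_gt0 subr_eq0 /=.
split=> [/orP[/eqP|/orP[/eqP|/eqP]] l_eq | [] ->].
- by constructor 3.
- by constructor 1; rewrite -l_eq addrC subrK.
- by constructor 2; rewrite -l_eq addrC subrK.
- by rewrite [um + c]addrC addrK eqxx orbT.
- by rewrite [um - c]addrC addrK eqxx !orbT.
- by rewrite eqxx.
Qed.

(* A_N is diagonalizable: the eigenspaces of the distinct eigenvalues u_m,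
   u_m + c and u_m - c have dimensions N, >= 1 and >= 1. *)
Lemma swlme_diagonalizable : diagonalizable A.
Proof.
have c_gt0 : 0 < c by rewrite sqrtr_gt0.
have eigen_rank_gt0 l : eigenvalue A l -> (0 < \rank (eigenspace A l))%N.
  by rewrite lt0n mxrank_eq0.
apply: (@diagonalizable_eigenspace_ranks _ _ _ [:: um; um + c; um - c]).
  rewrite /= !inE !negb_or andbT -andbA.
  by apply/and3P; split; apply/eqP => eq_c; lra.
rewrite !big_cons big_nil addn0 swlme_eigenspace_um ?gt_eqF //.
have /eigen_rank_gt0 : eigenvalue A (um + c).
  by rewrite swlme_eigenvalueE [um + c]addrC addrK eqxx orbT.
have /eigen_rank_gt0 : eigenvalue A (um - c).
  by rewrite swlme_eigenvalueE [um - c]addrC addrK eqxx !orbT.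
lia.
Qed.

End SWLMESpectrum.

Theorem mainTheorem1 (R : rcfType) (N : nat) (g h um : R) (alpha : nat -> R) :
  (1 <= N)%N -> 0 < g -> 0 < h ->
  let A := SWLME_A N g h um alpha in
  let c := Num.sqrt (g * h + alpha_sum N alpha 3) in
  (forall lambda : R,
     \det (A - lambda%:M) =
     (um - lambda) ^+ N * ((lambda - um) ^+ 2 - g * h - alpha_sum N alpha 3))
  /\ (forall lambda : R,
        eigenvalue A lambda <-> [\/ lambda = um + c, lambda = um - c | lambda = um])
  /\ \rank (eigenspace A um) = N
  /\ diagonalizable A.
Proof.
move=> N_gt0 g_gt0 h_gt0 A c.
have K_gt0 : 0 < g * h + alpha_sum N alpha 3.
  by rewrite ltr_wpDr ?alpha_sum_ge0 ?mulr_gt0.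
split; first exact: swlme_char_poly.
split=> [lambda|]; first exact: swlme_eigenvalueP.
by split; [rewrite swlme_eigenspace_um ?gt_eqF | exact: swlme_diagonalizable].
Qed.
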